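(* Let $N$ be a finite set of $n$ agents, let $k\in\{0,1,\dots,n\}$ be an integer, and let $j$ be an agent chosen uniformly at random from $N$. Let $\mathrm{OPT}$ and $\mathrm{OPT}'$ denote the optimal liquid welfare of $N$ and of $N\setminus\{j\}$ respectively. Then $$\Pr\Big[\mathrm{OPT}'\ \ge\ \Big(1-\frac{1}{k+1}\Big)\mathrm{OPT}\Big]\ \ge\ 1-\frac{k}{n}.$$
   Context: Each agent $i$ has value $v_i\ge0$ and budget $b_i\ge0$; there is a single divisible item. For an allocation $x$ with $x_i\ge0$, $\sum_i x_i\le1$, the liquid welfare is $\sum_i\min(v_ix_i,b_i)$; the optimal liquid welfare of a set of agents is the maximum of this quantity over all allocations of the item among those agents. *)

From HB Require Import structures.
From mathcomp Require Import all_boot all_order all_algebra.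
Set Implicit Arguments. Unset Strict Implicit. Unset Printing Implicit Defensive.
Import Order.TTheory GRing.Theory Num.Theory.
Local Open Scope ring_scope.

(* Agents are 'I_n. An allocation of the single divisible item among the
   agents of S is x with x_i >= 0, x_i = 0 outside S, and sum x_i <= 1. *)
Definition feasible_alloc (R : realFieldType) (n : nat) (S : {set 'I_n})
  (x : 'I_n -> R) : Prop :=
  (forall i, 0 <= x i) /\ (forall i, i \notin S -> x i = 0) /\
  \sum_(i < n) x i <= 1.

Definition liquid_welfare (R : realFieldType) (n : nat) (v b x : 'I_n -> R) : R :=
  \sum_(i < n) Num.min (v i * x i) (b i).

Definition is_opt_LW (R : realFieldType) (n : nat) (v b : 'I_n -> R)
  (S : {set 'I_n}) (w : R) : Prop :=
  (exists x, feasible_alloc S x /\ liquid_welfare v b x = w) /\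
  (forall x, feasible_alloc S x -> liquid_welfare v b x <= w).

(* Fix an optimal allocation x for all agents and let c j be agent j's
   contribution min (v j * x j) (b j), so that OPT is the sum of the c j.
   Withdrawing j's share of x is still feasible without j, hence
   OPT' j >= OPT - c j; the agent j can therefore only be bad if
   c j > OPT / (k + 1), and by a Markov-type count at most k of the
   nonnegative contributions can exceed a (k + 1)-th of their sum. *)
From HB Require Import structures.
From mathcomp Require Import all_boot all_order all_algebra.
Set Implicit Arguments. Unset Strict Implicit. Unset Printing Implicit Defensive.
Import Order.TTheory GRing.Theory Num.Theory.
Local Open Scope ring_scope.

Lemma card_gt_sum_fraction (R : realDomainType) (I : finType) (c : I -> R)
    (k : nat) :
  (forall i, 0 <= c i) -> (#|[set j | (\sum_i c i < k.+1%:R * c j)%R]| <= k)%N.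
Proof.
move=> c_ge0; set B := [set j | _]; rewrite leqNgt; apply/negP => kB.
have B_ne : has (mem B) (index_enum I).
  have /card_gt0P [j Bj] : (0 < #|B|)%N by apply: leq_ltn_trans kB.
  by apply/hasP; exists j; rewrite ?mem_index_enum.
have B_large j : j \in B -> \sum_i c i < k.+1%:R * c j by rewrite inE.
have := ltr_sum B_ne B_large.
rewrite -mulr_sumr sumr_const -[_ *+ #|B|]mulr_natl; apply/negP; rewrite -leNgt.
apply: (le_trans (y := k.+1%:R * \sum_i c i)).
  by rewrite ler_wpM2l // [leRHS](bigID (mem B)) /= lerDl sumr_ge0.
by rewrite ler_wpM2r ?sumr_ge0 ?ler_nat.
Qed.

Definition drop_agent (R : realFieldType) (n : nat) (x : 'I_n -> R) (j : 'I_n) :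
  'I_n -> R := fun i => if i == j then 0 else x i.

Lemma feasible_drop_agent (R : realFieldType) (n : nat) (S : {set 'I_n})
    (x : 'I_n -> R) (j : 'I_n) :
  feasible_alloc S x -> feasible_alloc (S :\ j) (drop_agent x j).
Proof.
move=> [x_ge0 [xS x_le1]]; rewrite /drop_agent.
have y_ge0 i : 0 <= (if i == j then 0 else x i) by case: eqP.
split=> //; split.
  by move=> i; rewrite !inE negb_and negbK; case: eqP => // _ /xS.
by apply: le_trans x_le1; apply: ler_sum => i _; case: eqP.
Qed.

Lemma liquid_welfare_drop_agent (R : realFieldType) (n : nat)
    (v b x : 'I_n -> R) (j : 'I_n) :
  0 <= b j ->
  liquid_welfare v b (drop_agent x j) =
  liquid_welfare v b x - Num.min (v j * x j) (b j).
Proof.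
move=> bj_ge0; rewrite /liquid_welfare (bigD1 j) //= [in RHS](bigD1 j) //=.
rewrite /drop_agent eqxx mulr0 (min_idPl bj_ge0) add0r addrAC subrr add0r.
by apply: eq_bigr => i /negPf ->.
Qed.

Lemma opt_LW_drop_agent (R : realFieldType) (n : nat) (v b : 'I_n -> R)
    (S : {set 'I_n}) (x : 'I_n -> R) (j : 'I_n) (w : R) :
  0 <= b j -> feasible_alloc S x -> is_opt_LW v b (S :\ j) w ->
  liquid_welfare v b x - Num.min (v j * x j) (b j) <= w.
Proof.
move=> bj_ge0 Sx [_ w_max].
by rewrite -liquid_welfare_drop_agent //; apply: w_max; exact: feasible_drop_agent.
Qed.

Theorem lemma5 (R : realFieldType) (n k : nat) (v b : 'I_n -> R)
  (hv : forall i, 0 <= v i) (hb : forall i, 0 <= b i)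
  (hn : (0 < n)%N) (hk : (k <= n)%N)
  (OPT : R) (OPT' : 'I_n -> R)
  (hOPT : is_opt_LW v b [set: 'I_n] OPT)
  (hOPT' : forall j, is_opt_LW v b ([set: 'I_n] :\ j) (OPT' j)) :
  1 - (k%:R : R) / n%:R <=
  #|[set j : 'I_n | (1 - (k.+1%:R)^-1) * OPT <= OPT' j]|%:R / n%:R.
Proof.
have [[x [Nx OPT_x]] _] := hOPT; rewrite -OPT_x.
have [x_ge0 _] := Nx.
pose c j := Num.min (v j * x j) (b j).
have c_ge0 j : 0 <= c j by rewrite le_min mulr_ge0 ?hv ?hb ?x_ge0.
set G := [set j | _].
have bad_large : ~: G \subset [set j | \sum_i c i < k.+1%:R * c j].
  apply/subsetP => j; rewrite !inE -ltNge mulrBl mul1r => /(le_lt_trans _).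
  move=> /(_ _ (opt_LW_drop_agent (hb j) Nx (hOPT' j))).
  by rewrite ltrD2l ltrN2 ltr_pdivrMl ?ltr0Sn.
have nkG : (n <= #|G| + k)%N.
  have := cardsC G; rewrite card_ord => GC; rewrite -[X in (X <= _)%N]GC.
  rewrite leq_add2l.
  exact: leq_trans (subset_leq_card bad_large) (card_gt_sum_fraction k c_ge0).
have n_gt0 : (0 : R) < n%:R by rewrite ltr0n.
rewrite -(ler_pM2r n_gt0) mulrBl mul1r !divfK ?gt_eqF //.
by rewrite lerBlDr -natrD ler_nat.
Qed.
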